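(* Let $V$ be a finite-dimensional real vector space and $X\subseteq V$ a finite or countable set in which every $2$-dimensional linear subset has fundamental vectors, equipped with a suitable ordering. Then the subsets of $X$ that are biclosed in $X$ form a complete lattice under containment. More specifically, for any collection $\mathcal{X}$ of biclosed subsets of $X$, \[\bigvee_{Y\in\mathcal{X}}Y=\overline{\bigcup_{Y\in\mathcal{X}}Y},\qquad \bigwedge_{Y\in\mathcal{X}}Y=\Big(\bigcap_{Y\in\mathcal{X}}Y\Big)^{\circ}.\]
   Context: $\mathrm{Span}_+$ denotes nonnegative linear combinations. For $Y\subseteq X$, $B\subseteq Y$: closed in $Y$ if $\alpha,\beta\in B$, $\gamma\in\mathrm{Span}_+(\alpha,\beta)\cap Y$ imply $\gamma\in B$; coclosed if $Y\setminus B$ closed; biclosed if both; weakly separable if $\mathrm{Span}_+(B)\cap\mathrm{Span}_+(Y\setminus B)=\{0\}$; $Y$ is clean if every biclosed subset of $Y$ is weakly separable in $Y$. $\overline{A}$ denotes the closure of $A$ in $X$ (smallest closed subset of $X$ containing $A$) and $A^\circ=X\setminus\overline{X\setminus A}$ the interior (largest coclosed subset of $X$ contained in $A$). A linear subset is $X\cap L$ for a subspace $L$. A $2$-dimensional linear subset $Y$ has fundamental vectors $\alpha,\beta\in Y$ if $Y\subseteq\mathrm{Span}_+\{\alpha,\beta\}$ and neither $\alpha$ nor $\beta$ lies in the nonnegative span of the other elements of $Y$. $F\subseteq X$ is full if $F\cap\mathrm{Span}\{\alpha,\beta\}=X\cap\mathrm{Span}\{\alpha,\beta\}$ for all $\alpha,\beta\in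 F$. An ordering $\gamma_1,\gamma_2,\ldots$ of $X$ with initial segments $X_i=\{\gamma_1,\dots,\gamma_i\}$ is suitable if (1) in every $2$-dimensional linear subset the fundamental vectors precede all its other vectors, and (2) for every $i$ and $\alpha,\beta,\gamma\in X_i$ there is a full $F\subseteq X$ containing them with $F\cap X_i$ clean. *)

From HB Require Import structures.
From mathcomp Require Import all_boot all_order all_algebra.
From mathcomp Require Import boolp classical_sets reals.
Set Implicit Arguments. Unset Strict Implicit. Unset Printing Implicit Defensive.
Import Order.TTheory GRing.Theory Num.Theory.
Local Open Scope classical_set_scope.
Local Open Scope ring_scope.

Section Defs.
Variables (R : realType) (n : nat).
Local Notation V := 'rV[R]_n.

Definition nspan (S : set V) : set V :=
  [set v | exists (k : nat) (a : 'I_k -> V) (c : 'I_k -> R),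
     (forall i, S (a i)) /\ (forall i, 0 <= c i) /\ v = \sum_(i < k) c i *: a i].

Definition closed_in (Y B : set V) : Prop :=
  forall a b g, B a -> B b -> nspan [set a; b] g -> Y g -> B g.

Definition coclosed_in (Y B : set V) : Prop := closed_in Y (Y `\` B).

Definition biclosed_in (Y B : set V) : Prop :=
  B `<=` Y /\ closed_in Y B /\ coclosed_in Y B.

Definition weakly_separable (Y B : set V) : Prop :=
  nspan B `&` nspan (Y `\` B) = [set 0].

Definition clean (Y : set V) : Prop :=
  forall B, biclosed_in Y B -> weakly_separable Y B.

Definition closure_in (X A : set V) : set V :=
  \bigcap_(C in [set C | C `<=` X /\ A `<=` C /\ closed_in X C]) C.

Definition interior_in (X A : set V) : set V := X `\` closure_in X (X `\` A).

Definition two_dim_linear_subset (X Y : set V) : Prop :=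
  exists L : {vspace V}, (\dim L = 2)%N /\
    Y = X `&` [set v | v \in L] /\
    exists a b, Y a /\ Y b /\ free [:: a; b].

Definition fundamental (Y : set V) (a b : V) : Prop :=
  Y a /\ Y b /\ Y `<=` nspan [set a; b] /\
  ~ nspan (Y `\ a) a /\ ~ nspan (Y `\ b) b.

Definition full (X F : set V) : Prop :=
  forall a b, F a -> F b ->
    F `&` [set v | v \in <<[:: a; b]>>%VS] = X `&` [set v | v \in <<[:: a; b]>>%VS].

(* An ordering gamma_0, gamma_1, ... of X: e enumerates X injectively on the
   index set D, which is either all of nat (X infinite) or {0,...,N-1}. *)
Definition enumeration (X : set V) (e : nat -> V) (D : set nat) : Prop :=
  (D = setT \/ exists N : nat, D = [set i | (i < N)%N]) /\
  (forall i j, D i -> D j -> e i = e j -> i = j) /\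
  e @` D = X.

Definition init_seg (e : nat -> V) (D : set nat) (i : nat) : set V :=
  [set v | exists j, D j /\ (j < i)%N /\ v = e j].

Definition suitable (X : set V) (e : nat -> V) (D : set nat) : Prop :=
  (forall Y a b, two_dim_linear_subset X Y -> fundamental Y a b ->
     forall j k, D j -> D k -> (e j = a \/ e j = b) ->
       Y (e k) -> e k <> a -> e k <> b -> (j < k)%N) /\
  (forall i a b c, init_seg e D i a -> init_seg e D i b -> init_seg e D i c ->
     exists F, F `<=` X /\ full X F /\ F a /\ F b /\ F c /\
       clean (F `&` init_seg e D i)).

End Defs.

From HB Require Import structures.
From mathcomp Require Import all_boot all_order all_algebra.
From mathcomp Require Import boolp classical_sets reals.
From mathcomp Require Import ring lra.
Set Implicit Arguments. Unset Strict Implicit. Unset Printing Implicit Defensive.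
Import Order.TTheory GRing.Theory Num.Theory.
Local Open Scope classical_set_scope.
Local Open Scope ring_scope.

(* Meets are complements of joins of complements, so everything reduces to:
   the closure of a union U of biclosed sets is biclosed.  If 0 is in X, the
   only biclosed sets are the empty set and X.  Otherwise the closure is built
   along the ordering: the i-th vector is added when it lies in U or in the
   cone of two vectors added before, and by induction each stage is biclosed
   in the initial segment X_i.  The inductive step studies the plane spanned
   by the new vector and an old one: its fundamental vectors come earlier in
   the ordering, so they are already decided, and condition (2) forbids a
   vector from lying both in a cone over the stage and in a cone over its
   complement.  The union of the stages is the closure of U, and it is
   coclosed because a violation would already appear at a finite stage. *)

Section Cones.
Variables (R : realType) (n : nat).
Local Notation V := 'rV[R]_n.
Implicit Types (a b u w y g : V) (S T : set V).

Lemma nspanS S T : S `<=` T -> nspan S `<=` nspan T.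
Proof.
by move=> ST v [k [a [c [Sa [c0 ->]]]]]; exists k, a, c; split=> // i; apply: ST.
Qed.

Lemma nspan2P a b v : nspan [set a; b] v <->
  exists p q, 0 <= p /\ 0 <= q /\ v = p *: a + q *: b.
Proof.
split=> [[k [f [c [Sf [c0 ->]]]]] | [p [q [p0 [q0 ->]]]]].
  elim: k f c Sf c0 => [|k IH] f c Sf c0.
    by exists 0, 0; rewrite big_ord0 !scale0r addr0.
  rewrite big_ord_recr /=.
  have [p [q [p0 [q0 ->]]]] := IH (f \o widen_ord (leqnSn k))
    (c \o widen_ord (leqnSn k)) (fun i => Sf _) (fun i => c0 _).
  have c_ge0 := c0 ord_max.
  case: (Sf ord_max) => ->.
    by exists (p + c ord_max), q; rewrite addr_ge0 // scalerDl addrAC.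
  by exists p, (q + c ord_max); rewrite addr_ge0 // scalerDl addrA.
exists 2%N, (fun i : 'I_2 => if i == ord0 then a else b),
  (fun i : 'I_2 => if i == ord0 then p else q).
split; first by move=> i; case: ifP => _; [left|right].
split; first by move=> i; case: ifP.
by rewrite big_ord_recr big_ord1.
Qed.

Lemma nspan2C a b : nspan [set a; b] = nspan [set b; a].
Proof. by rewrite setUC. Qed.

Lemma nspan2_sub S a b : S a -> S b -> nspan [set a; b] `<=` nspan S.
Proof. by move=> Sa Sb; apply: nspanS => x [->|->]. Qed.

Lemma memv_span2 a b p q : p *: a + q *: b \in <<[:: a; b]>>%VS.
Proof.
by apply: rpredD; apply: rpredZ; apply: memv_span; rewrite !inE eqxx ?orbT.
Qed.

Lemma memv_nspan2 a b v : nspan [set a; b] v -> v \in <<[:: a; b]>>%VS.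
Proof. by move=> /nspan2P [p [q [_ [_ ->]]]]; apply: memv_span2. Qed.

Lemma nspan11Z a r : 0 <= r -> nspan [set a; a] (r *: a).
Proof. by move=> r0; apply/nspan2P; exists r, 0; rewrite scale0r addr0. Qed.

Lemma nspan2Z a b v r : 0 <= r -> nspan [set a; b] v -> nspan [set a; b] (r *: v).
Proof.
move=> r0 /nspan2P [p [q [p0 [q0 ->]]]]; apply/nspan2P.
by exists (r * p), (r * q); rewrite !mulr_ge0 // scalerDr !scalerA.
Qed.

Lemma nspan11_sym a g : g != 0 -> nspan [set a; a] g -> nspan [set g; g] a.
Proof.
move=> g_neq0 /nspan2P [p [q [p0 [q0 gE]]]].
rewrite -scalerDl in gE; rewrite gE.
have pq_neq0 : p + q != 0.
  by apply: contraNneq g_neq0 => pq0; rewrite gE pq0 scale0r.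
have aE : a = (p + q)^-1 *: ((p + q) *: a) by rewrite scalerA mulVf ?scale1r.
by rewrite [X in nspan _ X]aE; apply: nspan11Z; rewrite invr_ge0 addr_ge0.
Qed.

Lemma nspan2_collinear gam y g k : gam = k *: y ->
  nspan [set gam; y] g -> nspan [set y; y] g \/ nspan [set gam; gam] g.
Proof.
move=> -> /nspan2P [s [t [s0 [t0 ->]]]].
rewrite scalerA -scalerDl.
have [r0|rn] := leP 0 (s * k + t); first by left; apply: nspan11Z.
have kn : k < 0.
  by rewrite ltNge; apply: contraTN rn => k0; rewrite -leNgt addr_ge0 ?mulr_ge0.
have -> : (s * k + t) *: y = ((s * k + t) / k) *: (k *: y).
  by rewrite scalerA divfK ?lt_eqF.
by right; apply: nspan11Z; rewrite ler_ndivlMr // mul0r ltW.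
Qed.

(* Which alternative holds is decided by the sign of det(u, w) in the basis
   (phi, psi). *)
Lemma nspan2_split phi psi u w g s t :
  nspan [set phi; psi] u -> nspan [set phi; psi] w -> 0 <= s -> 0 <= t ->
  g = s *: u + t *: w -> nspan [set phi; g] u \/ nspan [set w; psi] g.
Proof.
move=> /nspan2P [u1 [u2 [u1_ge0 [u2_ge0 ->]]]].
move=> /nspan2P [w1 [w2 [w1_ge0 [w2_ge0 ->]]]] s_ge0 t_ge0 ->.
have [-> | s_neq0] := eqVneq s 0.
  right; rewrite scale0r add0r; apply/nspan2P.
  by exists t, 0; rewrite scale0r addr0.
have [-> | u2_neq0] := eqVneq u2 0.
  by left; apply/nspan2P; exists u1, 0; rewrite !scale0r !addr0.
have s_gt0 : 0 < s by rewrite lt_def s_neq0.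
have u2_gt0 : 0 < u2 by rewrite lt_def u2_neq0.
set v1 := s * u1 + t * w1; set v2 := s * u2 + t * w2.
have -> : s *: (u1 *: phi + u2 *: psi) + t *: (w1 *: phi + w2 *: psi) =
    v1 *: phi + v2 *: psi by rewrite !scalerDr !scalerA addrACA -!scalerDl.
have v2_gt0 : 0 < v2.
  have := mulr_gt0 s_gt0 u2_gt0; have := mulr_ge0 t_ge0 w2_ge0.
  by rewrite /v2; lra.
have [D_ge0 | D_lt0] := leP 0 (u1 * w2 - u2 * w1).
  left; apply/nspan2P; exists (t * (u1 * w2 - u2 * w1) / v2), (u2 / v2).
  rewrite !divr_ge0 ?mulr_ge0 ?(ltW v2_gt0) //; split=> //; split=> //.
  rewrite scalerDr !scalerA addrA -scalerDl.
  by congr (_ *: _ + _ *: _); rewrite /v1 /v2 in v2_gt0 *; field; rewrite gt_eqF.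
have w1_gt0 : 0 < w1.
  rewrite lt_def w1_ge0 andbT; apply: contraTneq D_lt0 => ->.
  by rewrite mulr0 subr0 -leNgt mulr_ge0.
have v1_ge0 : 0 <= v1 by rewrite addr_ge0 ?mulr_ge0.
have D'_ge0 : 0 <= s * (u2 * w1 - u1 * w2).
  by rewrite mulr_ge0 ?(ltW s_gt0) //; lra.
right; apply/nspan2P; exists (v1 / w1), (s * (u2 * w1 - u1 * w2) / w1).
rewrite !divr_ge0 ?(ltW w1_gt0) //; split=> //; split=> //.
rewrite scalerDr !scalerA -addrA -scalerDl.
by congr (_ *: _ + _ *: _); rewrite /v1 /v2; field; rewrite gt_eqF.
Qed.
End Cones.

Section ClosureInterior.
Variables (R : realType) (n : nat).
Local Notation V := 'rV[R]_n.
Implicit Types (X Y A B C Z : set V).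

Lemma closure_in_closed X A : closed_in X (closure_in X A).
Proof.
by move=> a b g Ca Cb abg Xg C hC; apply: hC.2.2 (Ca C hC) (Cb C hC) abg Xg.
Qed.

Lemma closure_in_sub X A : A `<=` X -> closure_in X A `<=` X.
Proof. by move=> AX v; apply; split=> //; split=> // a b g. Qed.

Lemma subset_closure_in X A : A `<=` closure_in X A.
Proof. by move=> v Av C [_ [A_C _]]; apply: A_C. Qed.

Lemma closure_in_min X A C : C `<=` X -> A `<=` C -> closed_in X C ->
  closure_in X A `<=` C.
Proof. by move=> CX A_C cC v; apply. Qed.

Lemma closure_in_id X C : C `<=` X -> closed_in X C -> closure_in X C = C.
Proof.
move=> CX cC; apply/seteqP; split; last exact: subset_closure_in.
exact: closure_in_min.
Qed.

Lemma interior_in_sub X A : interior_in X A `<=` A.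
Proof.
move=> v [Xv nCv]; apply: contrapT => nAv.
by apply: nCv; apply: subset_closure_in.
Qed.

Lemma interior_in_max X A Z : Z `<=` X -> coclosed_in X Z -> Z `<=` A ->
  Z `<=` interior_in X A.
Proof.
move=> ZX ccZ ZA v Zv; split; first exact: ZX.
have : closure_in X (X `\` A) `<=` X `\` Z.
  apply: closure_in_min ccZ; first by move=> w [].
  by move=> w [Xw nAw]; split=> // /ZA.
by move=> /(_ v) sub /sub [].
Qed.

Lemma biclosed_in_setD X B : biclosed_in X B -> biclosed_in X (X `\` B).
Proof.
move=> [BX [cB ccB]]; split; first by move=> v [].
split; first exact: ccB.
move=> a b g [Xa nXBa] [Xb nXBb] abg Xg; split=> // -[_ nBg]; apply: nBg.
have XB_B v : X v -> ~ (X `\` B) v -> B v.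
  by move=> Xv nXBv; apply: contrapT => nBv; apply: nXBv.
exact: cB (XB_B _ Xa nXBa) (XB_B _ Xb nXBb) abg Xg.
Qed.

Lemma biclosed_in_setI Y Y' B : biclosed_in Y B -> Y' `<=` Y ->
  biclosed_in Y' (B `&` Y').
Proof.
move=> [BY [cB ccB]] Y'Y; split; first by move=> v [].
split=> [a b g [Ba _] [Bb _] abg Y'g | a b g [Y'a nBa] [Y'b nBb] abg Y'g].
  by split=> //; apply: cB Ba Bb abg (Y'Y _ Y'g).
split=> // -[Bg _].
have [_] := ccB a b g (conj (Y'Y _ Y'a) (fun Ba => nBa (conj Ba Y'a)))
  (conj (Y'Y _ Y'b) (fun Bb => nBb (conj Bb Y'b))) abg (Y'Y _ Y'g).
by apply.
Qed.

Lemma biclosed_in_set0 X : biclosed_in X set0.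
Proof. by split=> //; split=> // a b g _ _ _ Xg; split. Qed.

Lemma biclosed_in_self X : biclosed_in X X.
Proof. by split=> //; split=> // a b g []. Qed.

(* 0 lies in the cone of any vector, hence in every nonempty closed and every
   nonempty coclosed subset of X. *)
Lemma biclosed_in_zero X Y u : X 0 -> biclosed_in X Y -> Y u -> X `<=` Y.
Proof.
move=> X0 [YX [cY ccY]] Yu v Xv; apply: contrapT => nYv.
have ray0 (w : V) : nspan [set w; w] 0.
  by have := nspan11Z w (lexx 0); rewrite scale0r.
have [_] := ccY v v 0 (conj Xv nYv) (conj Xv nYv) (ray0 v) X0; apply.
exact: (cY u u 0 Yu Yu (ray0 u) X0).
Qed.

End ClosureInterior.

Section InitialSegments.
Variables (R : realType) (n : nat).
Local Notation V := 'rV[R]_n.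
Variables (X : set V) (e : nat -> V) (D : set nat).
Hypothesis enumX : enumeration X e D.
Local Notation W := (init_seg e D).

Lemma enum_mem j : D j -> X (e j).
Proof. by case: enumX => _ [_ <-] Dj; exists j. Qed.

Lemma enum_index v : X v -> exists2 j, D j & e j = v.
Proof. by case: enumX => _ [_ <-] [j Dj <-]; exists j. Qed.

Lemma init_seg_sub i : W i `<=` X.
Proof. by move=> v [j [Dj [_ ->]]]; apply: enum_mem. Qed.

Lemma init_segS i v : W i.+1 v <-> W i v \/ (D i /\ v = e i).
Proof.
split=> [[j [Dj [ji ->]]] | [[j [Dj [ji ->]]] | [Di ->]]].
- rewrite ltnS leq_eqVlt in ji.
  case/orP: ji => [/eqP eji|ji]; first by right; subst.
  by left; exists j.
- by exists j; split=> //; split=> //; apply: ltnW.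
- by exists i.
Qed.

Lemma init_seg_le i j : (i <= j)%N -> W i `<=` W j.
Proof.
move=> ij v [k [Dk [ki ->]]].
by exists k; split=> //; split=> //; apply: leq_trans ij.
Qed.

Lemma enum_notin_init_seg i : D i -> ~ W i (e i).
Proof.
move=> Di [j [Dj [ji eij]]]; case: enumX => _ [inj _].
by move: ji; rewrite (inj _ _ Di Dj eij) ltnn.
Qed.

Lemma init_seg_exhaust v : X v -> exists i, W i v.
Proof. by move=> /enum_index [j Dj <-]; exists j.+1, j. Qed.

End InitialSegments.

Section SuitableOrdering.
Variables (R : realType) (n : nat).
Local Notation V := 'rV[R]_n.
Variables (X : set V) (e : nat -> V) (D : set nat).
Hypothesis enumX : enumeration X e D.
Hypothesis fundX :
  forall Y, two_dim_linear_subset X Y -> exists a b, fundamental Y a b.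
Hypothesis suitX : suitable X e D.
Hypothesis X0 : ~ X 0.
Local Notation W := (init_seg e D).

Lemma init_seg_neq0 i v : W i v -> v != 0.
Proof.
by move=> /(init_seg_sub enumX) Xv; apply/eqP => v0; apply: X0; rewrite -v0.
Qed.

Lemma full_memv F a b v : full X F -> F a -> F b -> X v ->
  v \in <<[:: a; b]>>%VS -> F v.
Proof.
move=> fullF Fa Fb Xv abv.
by have [] : (F `&` [set v | v \in <<[:: a; b]>>%VS]) v by rewrite fullF.
Qed.

Lemma init_seg_cones_disjoint i E a b c d g : biclosed_in (W i) E ->
  W i a -> W i b -> ~ E a -> ~ E b -> E c -> E d -> X g ->
  nspan [set a; b] g -> nspan [set c; d] g -> False.
Proof.
move=> bicE Wa Wb nEa nEb Ec Ed Xg abg cdg; have [EW _] := bicE.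
have [F [_ [fullF [Fc [Fd [Fa cleanF]]]]]] :=
  suitX.2 i c d a (EW _ Ec) (EW _ Ed) Wa.
have Fg : F g := full_memv fullF Fc Fd Xg (memv_nspan2 cdg).
pose B := E `&` (F `&` W i).
have bicB : biclosed_in (F `&` W i) B by apply: (biclosed_in_setI bicE) => v [].
have Bg : nspan B g by apply: nspan2_sub cdg; split=> //; split=> //; apply: EW.
have nB v : F v -> W i v -> ~ E v -> ((F `&` W i) `\` B) v.
  by move=> Fv Wv nEv; split=> // -[].
have nBg : nspan ((F `&` W i) `\` B) g.
  move/nspan2P: abg => [p [q [p0 [q0 gE]]]].
  have [q_eq0 | q_neq0] := eqVneq q 0.
    apply: (nspan2_sub (nB _ Fa Wa nEa) (nB _ Fa Wa nEa)).
    by rewrite gE q_eq0 scale0r addr0; apply: nspan11Z.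
  have Fb : F b.
    apply: (full_memv fullF Fa Fg (init_seg_sub enumX Wb)).
    have -> : b = (- (p / q)) *: a + q^-1 *: g.
      rewrite gE scalerDr !scalerA mulVf // scale1r scaleNr mulrC.
      by rewrite addrA addNr add0r.
    exact: memv_span2.
  apply: (nspan2_sub (nB _ Fa Wa nEa) (nB _ Fb Wb nEb)).
  by apply/nspan2P; exists p, q.
have : [set 0] g by rewrite -(cleanF B bicB).
by move=> g0; apply: X0; rewrite -g0.
Qed.

Lemma two_dim_linear_subset_span a b : free [:: a; b] -> X a -> X b ->
  two_dim_linear_subset X (X `&` [set v | v \in <<[:: a; b]>>%VS]).
Proof.
move=> fr Xa Xb; exists <<[:: a; b]>>%VS; split; first by rewrite (eqP fr).
split=> //; exists a, b; split; last split=> //.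
  by split=> //; apply: memv_span; rewrite !inE eqxx.
by split=> //; apply: memv_span; rewrite !inE eqxx orbT.
Qed.

Lemma fundamental_in_init_seg i Y al be f g :
  two_dim_linear_subset X Y -> fundamental Y al be -> (f = al \/ f = be) ->
  Y g -> g <> al -> g <> be -> W i g -> W i f.
Proof.
move=> dimY fundY f_fund Yg g_al g_be [k [Dk [ki gE]]].
have Xf : X f.
  have [L [_ [YE _]]] := dimY.
  have [Yal [Ybe _]] := fundY.
  have : Y f by case: f_fund => ->.
  by rewrite YE => -[].
have [j Dj fE] := enum_index enumX Xf.
exists j; split=> //; split; last by [].
apply: ltn_trans ki; apply: (suitX.1 Y al be dimY fundY j k Dj Dk);
  by rewrite ?fE -?gE.
Qed.

Lemma cone_in_fundamental_cone i gam y g : X gam -> ~ W i gam ->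
  W i y -> W i g -> y <> g -> nspan [set gam; y] g ->
  (exists k, gam = k *: y) \/
  exists al be, W i al /\ W i be /\ nspan [set al; be] gam /\
    nspan [set al; be] y /\ nspan [set al; be] g.
Proof.
move=> Xgam nWgam Wy Wg yg gamyg.
have [fr | ] := boolP (free [:: gam; y]); last first.
  rewrite free_cons seq1_free negb_and !negbK => /orP [|y_eq0].
    by rewrite span_seq1 => /vlineP [k ->]; left; exists k.
  by rewrite (negPf (init_seg_neq0 Wy)) in y_eq0.
right; set Y := X `&` [set v | v \in <<[:: gam; y]>>%VS].
have Xy := init_seg_sub enumX Wy.
have dimY := two_dim_linear_subset_span fr Xgam Xy.
have [al [be fundY]] := fundX dimY.
have [_ [_ [Ysub [nal nbe]]]] := fundY.
have Yg : Y g := conj (init_seg_sub enumX Wg) (memv_nspan2 gamyg).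
have gam_g : gam <> g by move=> gamE; apply: nWgam; rewrite gamE.
have Ygam : Y gam by split=> //; apply: memv_span; rewrite !inE eqxx.
have Yy : Y y by split=> //; apply: memv_span; rewrite !inE eqxx orbT.
have g_gen : nspan (Y `\ g) g by apply: nspan2_sub gamyg.
have g_al : g <> al by move=> gE; apply: nal; rewrite -gE.
have g_be : g <> be by move=> gE; apply: nbe; rewrite -gE.
have Wfund f : f = al \/ f = be -> W i f.
  move=> f_fund.
  exact: (fundamental_in_init_seg dimY fundY f_fund Yg g_al g_be Wg).
exists al, be; split; first by apply: Wfund; left.
split; first by apply: Wfund; right.
by split; [exact: Ysub Ygam | split; [exact: Ysub Yy | exact: Ysub Yg]].
Qed.

Variable U : set V.
Hypothesis unionU :
  forall u, U u -> exists Y, biclosed_in X Y /\ Y u /\ Y `<=` U.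

Definition forced (E : set V) (gam : V) : Prop :=
  U gam \/ exists c d, E c /\ E d /\ nspan [set c; d] gam.

Definition extension (E : set V) (i : nat) : set V :=
  E `|` [set v | D i /\ v = e i /\ forced E v].

Section Extension.
Variables (i : nat) (E : set V).
Hypotheses (bicE : biclosed_in (W i) E) (UE : U `&` W i `<=` E).

Lemma forced_notin_cone_compl gam a b : X gam -> forced E gam ->
  W i a -> W i b -> ~ E a -> ~ E b -> ~ nspan [set a; b] gam.
Proof.
move=> Xgam [Ugam | [c [d [Ec [Ed cdgam]]]]] Wa Wb nEa nEb abgam.
  have [Y [[_ [_ ccY]] [Ygam YU]]] := unionU Ugam.
  have nY v : W i v -> ~ E v -> (X `\` Y) v.
    move=> Wv nEv; split; first exact: init_seg_sub Wv.
    by move/YU => Uv; apply/nEv/UE.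
  by have [_] := ccY a b gam (nY _ Wa nEa) (nY _ Wb nEb) abgam Xgam; apply.
exact: init_seg_cones_disjoint bicE Wa Wb nEa nEb Ec Ed Xgam abgam cdgam.
Qed.

Lemma forced_ray_mem gam g : forced E gam -> W i g ->
  nspan [set gam; gam] g -> E g.
Proof.
move=> [Ugam | [c [d [Ec [Ed cdgam]]]]] Wg gamg.
  have [Y [[_ [cY _]] [Ygam YU]]] := unionU Ugam.
  apply: UE; split=> //; apply: YU.
  exact: (cY _ _ _ Ygam Ygam gamg (init_seg_sub enumX Wg)).
apply: (bicE.2.1 c d g Ec Ed _ Wg).
move/nspan2P: gamg => [p [q [p0 [q0 ->]]]]; rewrite -scalerDl.
by apply: nspan2Z; rewrite ?addr_ge0.
Qed.

Lemma forced_cone_mem gam y g : X gam -> ~ W i gam -> forced E gam ->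
  E y -> W i g -> nspan [set gam; y] g -> E g.
Proof.
move=> Xgam nWgam Fgam Ey Wg gamyg; apply: contrapT => nEg.
have [EW [cE _]] := bicE.
have yg : y <> g by move=> ygE; apply: nEg; rewrite -ygE.
have /nspan2P [s [t [s0 [t0 gE]]]] := gamyg.
case: (cone_in_fundamental_cone Xgam nWgam (EW _ Ey) Wg yg gamyg) =>
  [[k gamE] | [al [be [Wal [Wbe [algam [aly alg]]]]]]].
  case: (nspan2_collinear gamE gamyg) => ray.
    exact: nEg (cE y y g Ey Ey ray Wg).
  exact: nEg (forced_ray_mem Fgam Wg ray).
wlog nEbe : al be Wal Wbe algam aly alg / ~ E be.
  move=> sym; have [Ebe | nEbe] := pselect (E be); last exact: (sym al be).
  have [Eal | nEal] := pselect (E al).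
    exact: nEg (cE al be g Eal Ebe alg Wg).
  by apply: (sym be al); rewrite // nspan2C.
have [Eal | nEal] := pselect (E al); last first.
  exact: forced_notin_cone_compl Xgam Fgam Wal Wbe nEal nEbe algam.
rewrite nspan2C in algam aly.
case: (nspan2_split algam aly s0 t0 gE) => [begam | yalg].
  by apply: forced_notin_cone_compl Xgam Fgam Wbe Wg nEbe nEg begam.
exact: nEg (cE y al g Ey Eal yalg Wg).
Qed.

Lemma unforced_cone_nmem gam b g : X gam -> ~ W i gam -> ~ forced E gam ->
  W i b -> ~ E b -> W i g -> nspan [set gam; b] g -> ~ E g.
Proof.
move=> Xgam nWgam nFgam Wb nEb Wg gambg Eg.
have [_ [cE ccE]] := bicE.
have bg : b <> g by move=> bgE; apply: nEb; rewrite bgE.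
have g_neq0 := init_seg_neq0 Wg.
have /nspan2P [s [t [s0 [t0 gE]]]] := gambg.
case: (cone_in_fundamental_cone Xgam nWgam Wb Wg bg gambg) =>
  [[k gamE] | [al [be [Wal [Wbe [algam [alb alg]]]]]]].
  case: (nspan2_collinear gamE gambg) => /(nspan11_sym g_neq0) ray.
    exact: nEb (cE g g b Eg Eg ray Wb).
  by apply: nFgam; right; exists g, g.
wlog Eal : al be Wal Wbe algam alb alg / E al.
  move=> sym; have [Eal | nEal] := pselect (E al); first exact: (sym al be).
  have [Ebe | nEbe] := pselect (E be).
    by apply: (sym be al); rewrite // nspan2C.
  by have [_] := ccE al be g (conj Wal nEal) (conj Wbe nEbe) alg Wg; apply.
have [Ebe | nEbe] := pselect (E be).
  by apply: nFgam; right; exists al, be.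
case: (nspan2_split algam alb s0 t0 gE) => [algam' | bbeg].
  by apply: nFgam; right; exists al, g.
by have [_] := ccE b be g (conj Wb nEb) (conj Wbe nEbe) bbeg Wg; apply.
Qed.

Lemma extension_closed : D i -> closed_in (W i.+1) (extension E i).
Proof.
move=> Di x y g Ex Ey xyg /init_segS [Wg | [_ gE]]; last first.
  right; split=> //; split=> //; subst g.
  case: Ex => [Ex | [_ [<- //]]]; case: Ey => [Ey | [_ [<- //]]].
  by right; exists x, y.
have Xei := enum_mem enumX Di; have nWei := enum_notin_init_seg enumX Di.
left; case: Ex Ey => [Ex | [_ [xE Fx]]] [Ey | [_ [yE Fy]]]; subst.
- exact: (bicE.2.1 x y g Ex Ey xyg Wg).
- by apply: forced_cone_mem Xei nWei Fy Ex Wg _; rewrite nspan2C.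
- exact: forced_cone_mem Xei nWei Fx Ey Wg xyg.
- exact: forced_ray_mem Fx Wg xyg.
Qed.

Lemma extension_compl v : D i -> (W i.+1 `\` extension E i) v <->
  (W i `\` E) v \/ (v = e i /\ ~ forced E (e i)).
Proof.
move=> Di; have nWei := enum_notin_init_seg enumX Di.
split=> [[/init_segS [Wv | [_ ->]] nEv] | [[Wv nEv] | [-> nF]]].
- by left; split=> // Ev; apply: nEv; left.
- by right; split=> // F; apply: nEv; right.
- split; first by apply/init_segS; left.
  by case=> // -[_ [vE _]]; apply: nWei; rewrite -vE.
- split; first by apply/init_segS; right.
  by case=> [/(bicE.1) | [_ [_ F]]].
Qed.

Lemma extension_coclosed : D i -> coclosed_in (W i.+1) (extension E i).
Proof.
move=> Di a b g /(extension_compl _ Di) Ha /(extension_compl _ Di) Hb abg Wg.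
have Xei := enum_mem enumX Di; have nWei := enum_notin_init_seg enumX Di.
apply/(extension_compl _ Di); case/init_segS: Wg => [Wg | [_ gE]]; last first.
  subst g; right; split=> // F.
  case: Ha => [[Wa nEa] | [_ nF]]; last exact: nF F.
  case: Hb => [[Wb nEb] | [_ nF]]; last exact: nF F.
  exact: forced_notin_cone_compl Xei F Wa Wb nEa nEb abg.
left; split=> // Eg.
have g_neq0 := init_seg_neq0 Wg.
case: Ha Hb => [[Wa nEa] | [aE nFa]] [[Wb nEb] | [bE nFb]]; subst.
- by have [_] := bicE.2.2 a b g (conj Wa nEa) (conj Wb nEb) abg Wg; apply.
- by apply: (unforced_cone_nmem Xei nWei nFb Wa nEa Wg) Eg; rewrite nspan2C.
- exact: (unforced_cone_nmem Xei nWei nFa Wb nEb Wg) Eg.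
- by apply: nFa; right; exists g, g; split=> //; split=> //; apply: nspan11_sym.
Qed.

Lemma extension_invariant : biclosed_in (W i.+1) (extension E i) /\
  U `&` W i.+1 `<=` extension E i.
Proof.
have [Di | nDi] := pselect (D i); last first.
  have -> : W i.+1 = W i.
    apply/seteqP; split=> v; first by case/init_segS => // -[].
    by move=> Wv; apply/init_segS; left.
  have -> : extension E i = E by apply/seteqP; split=> v; [case=> // -[] | left].
  by split.
split.
  split; last by split; [apply: extension_closed | apply: extension_coclosed].
  move=> v [Ev | [_ [-> _]]]; apply/init_segS; [left; exact: bicE.1 | by right].
move=> v [Uv /init_segS [Wv | [_ vE]]]; first by left; apply: UE.
by right; split=> //; split=> //; left.
Qed.

End Extension.

Fixpoint stage (i : nat) : set V :=
  if i is j.+1 then extension (stage j) j else set0.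

Lemma stage_invariant i : biclosed_in (W i) (stage i) /\ U `&` W i `<=` stage i.
Proof.
elim: i => [|i [bic UE]]; last exact: (extension_invariant bic UE).
have -> : W 0 = set0 by rewrite -subset0 => v [j [_ []]]; rewrite ltn0.
by split; [apply: biclosed_in_set0 | move=> v []].
Qed.

Lemma stage_sub_init_seg i : stage i `<=` W i.
Proof. by have [[]] := stage_invariant i. Qed.

Lemma stage_le i j : (i <= j)%N -> stage i `<=` stage j.
Proof. by move=> /subnK <-; elim: (j - i)%N => // k IH v /IH; left. Qed.

Hypothesis UX : U `<=` X.

Lemma stage_sub_closure i : stage i `<=` closure_in X U.
Proof.
elim: i => [|i IH] v //= [/IH // | [Di [vE [Uv | [c [d [Ec [Ed cdv]]]]]]]].
  exact: subset_closure_in.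
have Xv : X v by rewrite vE; exact: (enum_mem enumX Di).
exact: (closure_in_closed (IH _ Ec) (IH _ Ed) cdv Xv).
Qed.

Lemma closure_in_stages : closure_in X U = \bigcup_i stage i.
Proof.
apply/seteqP; split; last by apply: bigcup_sub => i _; apply: stage_sub_closure.
apply: closure_in_min.
- by move=> v [i _ /stage_sub_init_seg /(init_seg_sub enumX)].
- move=> v Uv; have [i Wv] := init_seg_exhaust enumX (UX Uv).
  by exists i => //; apply: (stage_invariant i).2.
move=> a b g [i _ Ea] [j _ Eb] abg Xg; have [k Wg] := init_seg_exhaust enumX Xg.
pose m := maxn (maxn i j) k.
have [i_m j_m k_m] : [/\ i <= m, j <= m & k <= m]%N.
  by split; rewrite /m !leq_max leqnn ?orbT.
exists m => //; apply: ((stage_invariant m).1.2.1 a b g) abg _.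
- exact: (stage_le i_m Ea).
- exact: (stage_le j_m Eb).
- exact: (init_seg_le k_m Wg).
Qed.

Lemma biclosed_closure_union : biclosed_in X (closure_in X U).
Proof.
split; first exact: closure_in_sub.
split; first exact: closure_in_closed.
move=> a b g [Xa nCa] [Xb nCb] abg Xg; split=> //.
rewrite closure_in_stages => -[k _ Eg].
have [ia Wa] := init_seg_exhaust enumX Xa.
have [ib Wb] := init_seg_exhaust enumX Xb.
pose m := maxn (maxn ia ib) k.
have [ia_m ib_m k_m] : [/\ ia <= m, ib <= m & k <= m]%N.
  by split; rewrite /m !leq_max leqnn ?orbT.
have nE v : ~ closure_in X U v -> ~ stage m v.
  by move=> nCv /stage_sub_closure.
have Emg : stage m g := stage_le k_m Eg.
have [[_ [_ ccE]] _] := stage_invariant m.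
have [_] := ccE a b g (conj (init_seg_le ia_m Wa) (nE _ nCa))
  (conj (init_seg_le ib_m Wb) (nE _ nCb)) abg (stage_sub_init_seg Emg).
by apply.
Qed.

End SuitableOrdering.

Lemma biclosed_closure_bigcup (R : realType) (n : nat) (X : set 'rV[R]_n)
    (e : nat -> 'rV[R]_n) (D : set nat) (I : Type) (P : set I)
    (F : I -> set 'rV[R]_n) :
  enumeration X e D ->
  (forall Y, two_dim_linear_subset X Y -> exists a b, fundamental Y a b) ->
  suitable X e D -> (forall j, P j -> biclosed_in X (F j)) ->
  biclosed_in X (closure_in X (\bigcup_(j in P) F j)).
Proof.
move=> enumX fundX suitX bicF.
have FX : \bigcup_(j in P) F j `<=` X by apply: bigcup_sub => j /bicF [].
have [X0 | nX0] := pselect (X 0); last first.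
  apply: (biclosed_closure_union enumX fundX suitX nX0 _ FX).
  move=> u [j Pj Fju]; exists (F j); split; first exact: bicF.
  by split=> //; apply: bigcup_sup.
have [[u [j Pj Fju]] | noU] := pselect (exists u, (\bigcup_(j in P) F j) u).
  have -> : \bigcup_(j in P) F j = X.
    apply/seteqP; split=> // v Xv; exists j => //.
    exact: (biclosed_in_zero X0 (bicF j Pj) Fju).
  have closedX : closed_in X X by move=> a b g.
  by rewrite closure_in_id //; apply: biclosed_in_self.
have -> : \bigcup_(j in P) F j = set0.
  by rewrite -subset0 => v Uv; apply: noU; exists v.
have closed0 : closed_in X set0 by move=> a b g [].
by rewrite closure_in_id //; apply: biclosed_in_set0.
Qed.

Unset Implicit Arguments.
Theorem theorem4p1 (R : realType) (n : nat) (X : set 'rV[R]_n)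
  (e : nat -> 'rV[R]_n) (D : set nat) :
  enumeration X e D ->
  (forall Y, two_dim_linear_subset X Y -> exists a b, fundamental Y a b) ->
  suitable X e D ->
  forall XX : set (set 'rV[R]_n), (forall Y, XX Y -> biclosed_in X Y) ->
    (* join = closure of the union: biclosed, upper bound, least *)
    (biclosed_in X (closure_in X (\bigcup_(Y in XX) Y)) /\
     (forall Y, XX Y -> Y `<=` closure_in X (\bigcup_(Y in XX) Y)) /\
     (forall Z, biclosed_in X Z -> (forall Y, XX Y -> Y `<=` Z) ->
        closure_in X (\bigcup_(Y in XX) Y) `<=` Z)) /\
    (* meet = interior of the intersection: biclosed, lower bound, greatest *)
    (biclosed_in X (interior_in X (\bigcap_(Y in XX) Y)) /\
     (forall Y, XX Y -> interior_in X (\bigcap_(Y in XX) Y) `<=` Y) /\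
     (forall Z, biclosed_in X Z -> (forall Y, XX Y -> Z `<=` Y) ->
        Z `<=` interior_in X (\bigcap_(Y in XX) Y))).
Proof.
move=> enumX fundX suitX XX bicXX.
have meet_compl : X `\` \bigcap_(Y in XX) Y = \bigcup_(Y in XX) (X `\` Y).
  by rewrite setDE setC_bigcap setI_bigcupr.
split; split.
- exact: biclosed_closure_bigcup enumX fundX suitX bicXX.
- split=> [Y XXY | Z [ZX [cZ _]] YZ].
    by move=> v Yv; apply: subset_closure_in; exists Y.
  by apply: closure_in_min => //; apply: bigcup_sub.
- rewrite /interior_in meet_compl; apply: biclosed_in_setD.
  apply: biclosed_closure_bigcup enumX fundX suitX _ => Y /bicXX.
  exact: biclosed_in_setD.
- split=> [Y XXY | Z [ZX [_ ccZ]] ZY].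
    by move=> v /interior_in_sub; apply.
  by apply: interior_in_max => //; apply: sub_bigcap.
Qed.
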